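(* Let $\mathfrak g$ be a finite-dimensional complex reductive Lie algebra, $\mathfrak t\subset\mathfrak g$ a Cartan subalgebra and $\Phi_{\mathfrak g}=\Phi(\mathfrak g,\mathfrak t)\subset\mathfrak t^\vee$ its root system. Let $Q=\sum_{i=1}^p A_ix^i$ with $p\ge 1$, $A_i\in\mathfrak t$, and for $\alpha\in\Phi_{\mathfrak g}$ let $d_\alpha=\deg_x\bigl(\sum_{i=1}^p\alpha(A_i)x^i\bigr)\in\{0,\dots,p\}$ (with $\deg_x(0)=0$). Let $$\mathbf B_Q=\Bigl\{(A_1',\dots,A_p')\in\mathfrak t^p : \deg_x\Bigl(\sum_{i=1}^p\alpha(A_i')x^i\Bigr)=d_\alpha\ \text{for all }\alpha\in\Phi_{\mathfrak g}\Bigr\}\subset\mathfrak t^p.$$ Then $\mathbf B_Q=\prod_{i=1}^p\mathbf B_i\subset\mathfrak t^p$, where $$\mathbf B_i=\bigcap_{\alpha:\ d_\alpha<i}\operatorname{Ker}(\alpha)\ \cap\ \bigcap_{\alpha:\ d_\alpha=i}\bigl(\mathfrak t\setminus\operatorname{Ker}(\alpha)\bigr)\subset\mathfrak t$$ (an empty intersection being $\mathfrak t$).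
   Context: $Q$ is an (untwisted) irregular type written in the coordinate $x=z^{-1}$; $\mathbf B_Q$ is its universal space of admissible deformations of pole order at most $p$, identified with a subset of $\mathfrak t^p$ via $\sum_i A_i'x^i\mapsto(A_1',\dots,A_p')$. *)

From HB Require Import structures.
From mathcomp Require Import all_boot all_order all_algebra.
Set Implicit Arguments. Unset Strict Implicit. Unset Printing Implicit Defensive.
Import GRing.Theory.
Local Open Scope ring_scope.

(* The Cartan subalgebra t is modelled as the n-dimensional space 'rV[F]_n;
   a (root) functional alpha in t^vee is a column vector, evaluated by
   pairing.  An irregular type Q = sum_{i=1}^p A_i x^i is the family
   A : 'I_p -> t with A i standing for A_{i+1}. *)

Definition ev (F : fieldType) (n : nat) (alpha : 'cV[F]_n) (v : 'rV[F]_n) : F :=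
  (v *m alpha) 0 0.

Definition alpha_poly (F : fieldType) (n p : nat) (alpha : 'cV[F]_n)
    (A : 'I_p -> 'rV[F]_n) : {poly F} :=
  \sum_(i < p) ev alpha (A i) *: 'X^(i.+1).

Definition degx (F : fieldType) (q : {poly F}) : nat := (size q).-1.

Definition d_alpha (F : fieldType) (n p : nat) (A : 'I_p -> 'rV[F]_n)
    (alpha : 'cV[F]_n) : nat := degx (alpha_poly alpha A).

Definition in_BQ (F : fieldType) (n p : nat) (Phi : seq 'cV[F]_n)
    (A A' : 'I_p -> 'rV[F]_n) : Prop :=
  forall alpha, alpha \in Phi -> d_alpha A' alpha = d_alpha A alpha.

Definition in_Bi (F : fieldType) (n p : nat) (Phi : seq 'cV[F]_n)
    (A : 'I_p -> 'rV[F]_n) (i : nat) (v : 'rV[F]_n) : Prop :=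
  (forall alpha, alpha \in Phi -> (d_alpha A alpha < i)%N -> ev alpha v = 0) /\
  (forall alpha, alpha \in Phi -> d_alpha A alpha = i -> ev alpha v <> 0).

(* The coefficient of x^i in sum_i alpha(A'_i) x^i is alpha(A'_i), so its
   x-degree is d exactly when alpha(A'_i) = 0 for all i > d and, if d > 0,
   alpha(A'_d) <> 0.  Since d_alpha <= p, regrouping these conditions by the
   index i instead of the root alpha turns B_Q into the product of the B_i. *)

From mathcomp Require Import all_boot all_order all_algebra.
From mathcomp Require Import zify.
Local Open Scope ring_scope.
Import GRing.Theory.

Lemma degx_eq (F : fieldType) (P : {poly F}) (d : nat) :
  degx P = d <-> (forall k, (d < k)%N -> P`_k = 0) /\ ((0 < d)%N -> P`_d != 0).
Proof.
rewrite /degx; split=> [<- | [high lead]].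
  split=> [k lt_k | d_gt0]; first exact: nth_default (leq_trans (leqSpred _) lt_k).
  have P_neq0 : P != 0 by apply: contraTneq d_gt0 => ->; rewrite size_poly0.
  by rewrite -lead_coefE lead_coef_eq0.
have size_le : (size P <= d.+1)%N by apply/leq_sizeP.
have size_gt : (0 < d)%N -> (d < size P)%N.
  by move=> /lead; apply: contraR; rewrite -leqNgt => /(nth_default 0) ->.
case: (posnP d) => [d0 | /size_gt]; lia.
Qed.

Lemma exists_ord_succ (p k : nat) :
  (0 < k <= p)%N -> exists i : 'I_p, k = i.+1.
Proof.
case/andP=> k_gt0 k_le; have lt_kp : (k.-1 < p)%N by lia.
by exists (Ordinal lt_kp); rewrite /= prednK.
Qed.

Section ShiftedPolynomial.

Context {R : nzRingType} {p : nat} (c : 'I_p -> R).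

Local Notation P := (\sum_(i < p) c i *: 'X^(i.+1) : {poly R}).

Lemma coef_shifted_lift (i : 'I_p) : P`_i.+1 = c i.
Proof.
rewrite coef_sum (bigD1 i) //= coefZ coefXn eqxx mulr1 big1 ?addr0 // => j ne_ji.
by rewrite coefZ coefXn eqSS eq_sym val_eqE (negbTE ne_ji) mulr0.
Qed.

Lemma coef_shifted_out (k : nat) : ~~ (0 < k <= p)%N -> P`_k = 0.
Proof.
move=> k_out; rewrite coef_sum big1 // => j _; rewrite coefZ coefXn.
by case: eqP => [k_eq | _]; [move: k_out; rewrite k_eq ltn_ord | rewrite mulr0].
Qed.

Lemma coef_shiftedP (k : nat) : (exists i : 'I_p, k = i.+1) \/ P`_k = 0.
Proof.
by case: (boolP (0 < k <= p)%N) => [/exists_ord_succ | /coef_shifted_out]; auto.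
Qed.

Lemma size_shifted_le : (size P <= p.+1)%N.
Proof. by apply/leq_sizeP => k lt_pk; rewrite coef_shifted_out //; lia. Qed.

End ShiftedPolynomial.

Section RootDegree.

Context {F : fieldType} {n p : nat} (alpha : 'cV[F]_n).

Lemma d_alpha_le (A : 'I_p -> 'rV[F]_n) : (d_alpha A alpha <= p)%N.
Proof. by rewrite /d_alpha /degx -subn1 leq_subLR add1n size_shifted_le. Qed.

Lemma d_alpha_eq (A' : 'I_p -> 'rV[F]_n) (d : nat) : (d <= p)%N ->
  d_alpha A' alpha = d <->
  (forall i : 'I_p, ((d < i.+1)%N -> ev alpha (A' i) = 0) /\
                    (d = i.+1 -> ev alpha (A' i) <> 0)).
Proof.
move=> d_le; rewrite /d_alpha degx_eq /alpha_poly; split.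
  case=> high lead i; rewrite -(coef_shifted_lift (fun j => ev alpha (A' j))).
  by split=> [/high // | d_eq]; apply/eqP; rewrite -d_eq lead // d_eq.
move=> H; split=> [k lt_dk | d_gt0].
  have [[i k_eq] | //] := coef_shiftedP (fun j => ev alpha (A' j)) k.
  by rewrite k_eq coef_shifted_lift; apply: (H i).1; rewrite -k_eq.
have [i d_eq] : exists i : 'I_p, d = i.+1 by apply: exists_ord_succ; lia.
by rewrite d_eq coef_shifted_lift; apply/eqP/(H i).2.
Qed.

End RootDegree.

Theorem proposition2p6 (F : fieldType) (n p : nat) (Phi : seq 'cV[F]_n)
    (A : 'I_p -> 'rV[F]_n) :
  (0 < p)%N ->
  forall A' : 'I_p -> 'rV[F]_n,
    in_BQ Phi A A' <-> (forall i : 'I_p, in_Bi Phi A i.+1 (A' i)).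
Proof.
(* For p = 0 both sides hold trivially. *)
move=> _ A'; rewrite /in_BQ /in_Bi; split=> [BQ i | Bi alpha alpha_in].
  split=> alpha alpha_in;
    by case: ((d_alpha_eq alpha A' _ (d_alpha_le alpha A)).1 (BQ alpha alpha_in) i).
apply/(d_alpha_eq alpha A' _ (d_alpha_le alpha A)) => i.
by split; [apply: (Bi i).1 | apply: (Bi i).2].
Qed.
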